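(* Let $(X,d)$ be a metric space, $\mu$ a non-atomic Borel measure on $X$, $m$ a Borel measure on $X$, $0<p<\infty$, and let $\Gamma^*\subset\Gamma^\mu$ be a family of paths closed under taking non-trivial subpaths such that any two points of $X$ are joined by a path in $\Gamma^*$. Let $F\subset X$ satisfy $$\inf\{\|f\|_{N^{1,p}}: f\in\tilde N^{1,p}(X),\ f|_F\ge1\}=0.$$ Then $\mathrm{Mod}_p(\Gamma_F)=0$, where $\Gamma_F=\{\gamma\in\Gamma^*:\mathrm{Im}(\gamma)\cap F\neq\emptyset\}$.
   Context: A path is a continuous map $\gamma:[a,b]\to X$; a subpath is a restriction to a subinterval, trivial if that interval is a point; $\mathrm{Im}(\gamma)=\gamma([a,b])$. $\mu$ non-atomic: $\mu(\{x\})=0$ for all $x$. $\Gamma^\mu$ is the set of all non-trivial injective paths $\gamma$ with $0<\mu(\mathrm{Im}(\tilde\gamma))<\infty$ for every non-trivial subpath $\tilde\gamma$. For Borel $g\ge0$, $\int_\gamma g:=\int_{\mathrm{Im}(\gamma)}g\,d\mu$. For $\Gamma\subset\Gamma^*$, $\mathrm{Mod}_p(\Gamma)=\inf\int_Xg^p\,dm$ over Borel $g\ge0$ with $\int_\gamma g\ge1$ for all $\gamma\in\Gamma$. A Borel $\rho\ge0$ is a $p$-weak upper gradient of $f$ if $|f(x)-f(y)|\le\int_\gamma\rho$ for all $\gamma\in\Gamma^*$ outside a family of $p$-modulus zero, $x,y$ the endpoints of $\gamma$. $\tilde N^{1,p}(X)$ is the set of $f\in L^p(m)$ having a $p$-weak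 upper gradient in $L^p(m)$, with $\|f\|_{N^{1,p}}=\|f\|_{L^p(m)}+\inf_\rho\|\rho\|_{L^p(m)}$ over all $p$-weak upper gradients $\rho$ of $f$. *)

From HB Require Import structures.
From mathcomp Require Import all_boot all_order all_algebra.
From mathcomp Require Import all_classical all_reals all_analysis.
From mathcomp Require Import measurable_realfun.
Set Implicit Arguments. Unset Strict Implicit. Unset Printing Implicit Defensive.
Import Order.TTheory GRing.Theory Num.Theory.
Local Open Scope classical_set_scope.
Local Open Scope ring_scope.

Definition is_metric {R : realType} {T : Type} (dist : T -> T -> R) : Prop :=
  (forall x y, dist x y = 0 <-> x = y) /\
  (forall x y, dist x y = dist y x) /\
  (forall x y z, dist x z <= dist x y + dist y z).

Definition dopen {R : realType} {T : Type} (dist : T -> T -> R) (U : set T) : Prop :=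
  forall x, U x -> exists2 e : R, 0 < e & [set y | dist x y < e] `<=` U.

Definition borel_for {R : realType} {d} (T : measurableType d) (dist : T -> T -> R) : Prop :=
  (@measurable d T) = <<s dopen dist >>.

(* A (parametrized) path: gamma restricted to [a,b] *)
Record mpath (R : realType) (T : Type) := Path { pa : R; pb : R; pf : R -> T }.

Section paths.
Context {R : realType} {T : Type}.

Definition is_path (dist : T -> T -> R) (g : mpath R T) : Prop :=
  pa g <= pb g /\
  forall t, `[pa g, pb g]%classic t -> forall e : R, 0 < e ->
    exists2 del : R, 0 < del & forall s, `[pa g, pb g]%classic s ->
      `|s - t| < del -> dist (pf g t) (pf g s) < e.

Definition Im (g : mpath R T) : set T := pf g @` `[pa g, pb g]%classic.

Definition nontrivial (g : mpath R T) : Prop := pa g < pb g.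

Definition subpath (h g : mpath R T) : Prop :=
  pa g <= pa h /\ pa h <= pb h /\ pb h <= pb g /\ pf h = pf g.

Definition injective_path (g : mpath R T) : Prop :=
  {in `[pa g, pb g]%classic &, injective (pf g)}.

End paths.

Section newtonian.
Context {R : realType} {d : measure_display} {T : measurableType d}.
Local Open Scope ereal_scope.

Definition Gamma_mu (dist : T -> T -> R) (mu : {measure set T -> \bar R}) :
  set (mpath R T) :=
  [set g | is_path dist g /\ nontrivial g /\ injective_path g /\
     forall h, subpath h g -> nontrivial h ->
       0 < mu (Im h) /\ mu (Im h) < +oo].

Definition lineint (mu : {measure set T -> \bar R}) (gam : mpath R T)
  (g : T -> \bar R) : \bar R := \int[mu]_(x in Im gam) g x.

Definition admissible (mu : {measure set T -> \bar R}) (Gam : set (mpath R T))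
  (g : T -> \bar R) : Prop :=
  measurable_fun [set: T] g /\ (forall x, 0 <= g x) /\
  forall gam, Gam gam -> 1 <= lineint mu gam g.

Definition Mod_p (mu m : {measure set T -> \bar R}) (p : R)
  (Gam : set (mpath R T)) : \bar R :=
  ereal_inf [set \int[m]_x (poweR (g x) p) | g in admissible mu Gam].

Definition weak_upper_gradient (mu m : {measure set T -> \bar R}) (p : R)
  (Gstar : set (mpath R T)) (f : T -> R) (rho : T -> \bar R) : Prop :=
  measurable_fun [set: T] rho /\ (forall x, 0 <= rho x) /\
  exists2 Gam0, Gam0 `<=` Gstar /\ Mod_p mu m p Gam0 = 0 &
    forall gam, Gstar gam -> ~ Gam0 gam ->
      (`|f (pf gam (pa gam)) - f (pf gam (pb gam))|)%:E <= lineint mu gam rho.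

Definition inLp (m : {measure set T -> \bar R}) (p : R) (f : T -> \bar R) : Prop :=
  measurable_fun [set: T] f /\ \int[m]_x (poweR `|f x| p) < +oo.

Definition Ntilde (mu m : {measure set T -> \bar R}) (p : R)
  (Gstar : set (mpath R T)) : set (T -> R) :=
  [set f | inLp m p (EFin \o f) /\
     exists2 rho, weak_upper_gradient mu m p Gstar f rho & inLp m p rho].

Definition N1p_norm (mu m : {measure set T -> \bar R}) (p : R)
  (Gstar : set (mpath R T)) (f : T -> R) : \bar R :=
  Lnorm m p%:E (EFin \o f) +
  ereal_inf [set Lnorm m p%:E rho | rho in weak_upper_gradient mu m p Gstar f].

Definition Gamma_F (Gstar : set (mpath R T)) (F : set T) : set (mpath R T) :=
  [set gam | Gstar gam /\ Im gam `&` F !=set0].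

End newtonian.

From Pilot Require Import Defs.
From HB Require Import structures.
From mathcomp Require Import all_boot all_order all_algebra.
From mathcomp Require Import all_classical all_reals all_analysis.
From mathcomp Require Import lra measurable_realfun.
Import Order.TTheory GRing.Theory Num.Theory numFieldNormedType.Exports.
Local Open Scope classical_set_scope.
Local Open Scope ring_scope.

(* Given eps > 0, pick for every i a test function f_i >= 1 on F with upper
   gradient rho_i off an exceptional family G0_i and a function k_i admissible
   for G0_i, all with p-energy at most eps 2^-(i+1) even after scaling f_i and
   rho_i by c_i = i+2.  The p-th root G of the series of the p-th powers of
   c_i rho_i, k_i and c_i |f_i| dominates each of them and has p-energy at most
   3 eps.  G is admissible for Gamma_F: if some f_i drops to 1/2 on a curve
   meeting F, the subcurve between the two points has line integral of rho_i
   at least 1/2 or of k_i at least 1; otherwise every f_i exceeds 1/2 on the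
   curve, whose image has positive measure, so c_i |f_i| integrates to at
   least 1 for i large. *)

Lemma metric_ge0 {R : realType} {T : Type} {dist : T -> T -> R} :
  is_metric dist -> forall x y, 0 <= dist x y.
Proof.
move=> [d0 [dsym dtri]] x y.
have := dtri x y x; rewrite (proj2 (d0 x x) erefl) (dsym y x).
by move=> h; rewrite -(@pmulr_rge0 _ 2) // mulr2n mulrDl mul1r.
Qed.

(* The complement of the image is open: a point off the image is at positive
   distance from it, the distance being attained on the compact interval. *)
Lemma measurable_Im {R : realType} {d} {T : measurableType d}
    (dist : T -> T -> R) (g : mpath R T) :
  is_metric dist -> borel_for dist -> is_path dist g -> measurable (Defs.Im g).
Proof.
move=> hm hb [hab hc].
have dge0 := metric_ge0 hm.
move: hm => [d0 [dsym dtri]].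
suff : measurable (~` Defs.Im g) by move/measurableC; rewrite setCK.
rewrite hb; apply: sub_gen_smallest => z zn.
pose psi t := dist z (pf g t).
have [c cab cmin] : exists2 c, c \in `[pa g, pb g] &
    forall t, t \in `[pa g, pb g] -> psi c <= psi t.
  apply: (@EVT_min R psi (pa g) (pb g) hab).
  apply/subspace_continuousP => t tab; apply/cvgrPdist_lt => e e0.
  have [del del0 H] := hc t tab e e0.
  rewrite near_withinE; near=> s => sab.
  have hs : `|s - t| < del.
    by rewrite distrC; near: s; apply/nbhs_ballP; exists del => // u; rewrite /ball /=.
  apply: le_lt_trans (H s sab hs).
  rewrite /psi /from_subspace /= ler_norml.
  have h1 := dtri z (pf g s) (pf g t); have h2 := dtri z (pf g t) (pf g s).
  rewrite (dsym (pf g s) (pf g t)) in h1.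
  apply/andP; split; lra.
exists (psi c).
  rewrite lt_neqAle dge0 andbT; apply/eqP => /esym /d0 zc.
  by apply: zn; exists c => //; rewrite zc.
move=> y /= hy [t tab ty]; move: hy; rewrite -ty.
by move/(_ t tab): cmin; rewrite /psi => /le_lt_trans h /h; rewrite ltxx.
Unshelve. all: by end_near.
Qed.

Section poweR_root.
Context {R : realType}.
Variable p : R.
Hypothesis p0 : 0 < p.
Local Open Scope ereal_scope.

Lemma poweRVK (S : \bar R) : 0 <= S -> (S `^ p^-1) `^ p = S.
Proof. by move=> S0; rewrite -poweRrM mulVf ?gt_eqF // poweRe1. Qed.

Lemma le_poweRV (a S : \bar R) : 0 <= a -> 0 <= S -> a `^ p <= S -> a <= S `^ p^-1.
Proof.
move=> a0 S0 h.
have -> : a = (a `^ p) `^ p^-1 by rewrite -poweRrM mulfV ?gt_eqF // poweRe1.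
apply: gt0_ler_poweR => //.
- by rewrite invr_ge0 ltW.
- by rewrite in_itv /= poweR_ge0 leey.
- by rewrite in_itv /= S0 leey.
Qed.

End poweR_root.

Section integral_bounds.
Context {R : realType} {d : measure_display} {T : measurableType d}.
Variables (m : {measure set T -> \bar R}) (p : R).
Hypothesis p0 : 0 < p.
Local Open Scope ereal_scope.

Lemma integral_poweRZ_le (c del : R) (w : T -> \bar R) :
  (0 <= c)%R -> (forall x, 0 <= w x) -> measurable_fun setT w ->
  Lnorm m p%:E w < del%:E ->
  \int[m]_x (c%:E * w x) `^ p <= ((c * del) `^ p)%:E.
Proof.
move=> c0 w0 mw hL.
have d0 : (0 <= del)%R by rewrite -lee_fin; apply: le_trans (ltW hL); exact: Lnorm_ge0.
under eq_integral => x _ do rewrite poweRM // poweR_EFin.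
have mwp : measurable_fun setT (fun x => w x `^ p).
  exact: measurableT_comp (measurable_poweR _) mw.
rewrite ge0_integralZl_EFin ?powR_ge0 //; last by move=> x _; exact: poweR_ge0.
have -> : \int[m]_x w x `^ p = Lnorm m p%:E w `^ p.
  by rewrite poweR_Lnorm ?gt_eqF //; apply: eq_integral => x _; rewrite gee0_abs.
rewrite powRM // EFinM; apply: lee_wpmul2l; first by rewrite lee_fin powR_ge0.
rewrite -poweR_EFin; apply: gt0_ler_poweR; first exact: ltW.
- by rewrite in_itv /= Lnorm_ge0 leey.
- by rewrite in_itv /= lee_fin d0 leey.
- exact: ltW.
Qed.

Lemma integral_poweRD3 (a b c : T -> \bar R) :
  measurable_fun setT a -> measurable_fun setT b -> measurable_fun setT c ->
  \int[m]_x (a x `^ p + b x `^ p + c x `^ p) =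
  \int[m]_x a x `^ p + \int[m]_x b x `^ p + \int[m]_x c x `^ p.
Proof.
have mpow (w : T -> \bar R) : measurable_fun setT w -> measurable_fun setT (fun x => w x `^ p).
  exact: measurableT_comp (measurable_poweR _).
move=> ma mb mc; rewrite ge0_integralD //; last 4 first.
- by move=> x _; rewrite adde_ge0 ?poweR_ge0.
- exact: emeasurable_funD (mpow _ ma) (mpow _ mb).
- by move=> x _; exact: poweR_ge0.
- exact: mpow.
by rewrite ge0_integralD // => *; rewrite ?poweR_ge0 //; exact: mpow.
Qed.

End integral_bounds.

Definition root_series {R : realType} {T : Type} (p : R) (u : nat -> T -> \bar R)
  (x : T) : \bar R := ((\sum_(i <oo) u i x) `^ p^-1)%E.

Section root_series.
Context {R : realType} {d : measure_display} {T : measurableType d}.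
Context {p : R} {u : nat -> T -> \bar R}.
Hypothesis p0 : 0 < p.
Local Open Scope ereal_scope.
Hypotheses (u0 : forall i x, 0 <= u i x) (mu_ : forall i, measurable_fun setT (u i)).

Let measurable_series : measurable_fun setT (fun x => \sum_(i <oo) u i x).
Proof. exact: ge0_emeasurable_sum (fun i x _ _ => u0 i x) (fun i _ => mu_ i). Qed.

Let series_ge0 x : 0 <= \sum_(i <oo) u i x.
Proof. by apply: nneseries_ge0 => i _ _; exact: u0. Qed.

Lemma measurable_root_series : measurable_fun setT (root_series p u).
Proof. exact: measurableT_comp (measurable_poweR _) measurable_series. Qed.

Lemma root_series_ge (i : nat) (x : T) (a : \bar R) :
  0 <= a -> a `^ p <= u i x -> a <= root_series p u x.
Proof.
move=> a0 ha; apply: le_poweRV => //; apply: le_trans ha _.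
by rewrite (nneseriesD1 (n := i)) // ?leeDl // nneseries_ge0 // => j _ _; exact: u0.
Qed.

Lemma integral_root_series (m : {measure set T -> \bar R}) :
  \int[m]_x root_series p u x `^ p = \sum_(i <oo) \int[m]_x u i x.
Proof.
under eq_integral => x _ do rewrite poweRVK //.
exact: integral_nneseries.
Qed.

End root_series.

Section modulus_Gamma_F.
Context {R : realType} {d : measure_display} {T : measurableType d}.
Context {dist : T -> T -> R} {mu m : {measure set T -> \bar R}} {p : R}
  {Gstar : set (mpath R T)} {F : set T}.
Hypotheses (hm : is_metric dist) (hb : borel_for dist) (p0 : 0 < p)
  (hGs : Gstar `<=` Gamma_mu dist mu)
  (hsub : forall g h, Gstar g -> subpath h g -> nontrivial h -> Gstar h).
Local Open Scope ereal_scope.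

Let measurable_Im_Gstar {gam} : Gstar gam -> measurable (Defs.Im gam).
Proof. by move=> /hGs [pg _]; exact: measurable_Im hm hb pg. Qed.

Lemma le_lineint {gam} {v w : T -> \bar R} : Gstar gam ->
  measurable_fun setT v -> measurable_fun setT w ->
  (forall x, 0 <= v x) -> (forall x, v x <= w x) ->
  lineint mu gam v <= lineint mu gam w.
Proof.
move=> /measurable_Im_Gstar mI mv mw v0 vw.
apply: ge0_le_integral => //.
- exact: measurable_funS mv.
- exact: measurable_funS mw.
Qed.

Lemma lineint_subpath {gam h} {w : T -> \bar R} : Gstar gam -> Gstar h ->
  Defs.Im h `<=` Defs.Im gam -> measurable_fun setT w -> (forall x, 0 <= w x) ->
  lineint mu h w <= lineint mu gam w.
Proof.
move=> /measurable_Im_Gstar mI /measurable_Im_Gstar mIh hI mw w0.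
apply: ge0_subset_integral => //; exact: measurable_funS mw.
Qed.

Lemma Gstar_Im_measure {gam} : Gstar gam ->
  0 < mu (Defs.Im gam) /\ mu (Defs.Im gam) < +oo.
Proof.
move=> /hGs [[ab _] [ntg [_ hsg]]].
by apply: hsg ntg; split; [|split; [|split]].
Qed.

Lemma Gstar_restrict gam (s t : R) :
  Gstar gam -> `[pa gam, pb gam]%classic s -> `[pa gam, pb gam]%classic t -> (s < t)%R ->
  Gstar (Path s t (pf gam)) /\ Defs.Im (Path s t (pf gam)) `<=` Defs.Im gam.
Proof.
rewrite /= !in_itv /= => Gg /andP[le_as _] /andP[_ le_tb] st; split.
  by apply: (hsub _ _ Gg) => //; split; [|split; [exact: ltW|split]].
move=> z [r /= rin <-]; exists r => //; move: rin; rewrite /= !in_itv /=.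
by case/andP=> sr rt; rewrite (le_trans le_as sr) (le_trans rt le_tb).
Qed.

Record F_test (f : T -> R) (rho : T -> \bar R) (G0 : set (mpath R T))
    (k : T -> \bar R) : Prop := FTest {
  F_test_measurable : measurable_fun setT (EFin \o f);
  F_test_ge1 : forall x, F x -> (1 <= f x)%R;
  F_test_measurable_grad : measurable_fun setT rho;
  F_test_grad_ge0 : forall x, 0 <= rho x;
  F_test_upper_gradient : forall gam, Gstar gam -> ~ G0 gam ->
    (`|f (pf gam (pa gam)) - f (pf gam (pb gam))|)%:E <= lineint mu gam rho;
  F_test_admissible : admissible mu G0 k }.

Lemma exists_small_F_test :
  ereal_inf [set N1p_norm mu m p Gstar f |
    f in [set f | Ntilde mu m p Gstar f /\ forall x, F x -> (1 <= f x)%R]] = 0 ->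
  forall c e : R, (0 < c)%R -> (0 < e)%R ->
  exists f rho G0 k, F_test f rho G0 k /\
    [/\ \int[m]_x (c%:E * `|(f x)%:E|) `^ p <= e%:E,
        \int[m]_x (c%:E * rho x) `^ p <= e%:E &
        \int[m]_x k x `^ p <= e%:E].
Proof.
move=> hinf c e c0 e0.
pose del := (e `^ p^-1 / c)%R.
have del0 : (0 < del)%R by rewrite divr_gt0 // powR_gt0.
have cdel : ((c * del) `^ p = e)%R.
  by rewrite mulrC divfK ?gt_eqF // -powRrM mulVf ?gt_eqF // powRr1 // ltW.
have : ereal_inf [set N1p_norm mu m p Gstar f | f in [set f |
    Ntilde mu m p Gstar f /\ forall x, F x -> (1 <= f x)%R]] < del%:E.
  by rewrite hinf lte_fin.
move/ereal_inf_lt => [_ [f [[[mf _] _] fF] <-]]; rewrite /N1p_norm.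
set W := ereal_inf _ => hN.
have W0 : 0 <= W by apply: le_ereal_inf_tmp => _ [rho _ <-]; exact: Lnorm_ge0.
have hLf : Lnorm m p%:E (EFin \o f) < del%:E.
  by apply: le_lt_trans hN; apply: leeDl.
have /ereal_inf_lt[_ [rho [mrho [rho0 [G0 [_ G0mod] hG0]]] <-] hrho] : W < del%:E.
  by apply: le_lt_trans hN; apply: leeDr; exact: Lnorm_ge0.
have /ereal_inf_lt[_ [k kadm <-] hk] : Mod_p mu m p G0 < e%:E by rewrite G0mod lte_fin.
exists f, rho, G0, k; split; first exact: FTest.
split; last exact: ltW.
- rewrite -cdel; apply: integral_poweRZ_le (ltW c0) _ _ _ => //.
    by apply: measurableT_comp mf; exact: abse_measurable.
  by rewrite (Lnorm_abse m (EFin \o f)).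
- by rewrite -cdel; apply: integral_poweRZ_le (ltW c0) rho0 mrho hrho.
Qed.

Lemma lineint_ge1_of_crossing {f rho G0 k} {c : R} {G : T -> \bar R} {gam y} :
  F_test f rho G0 k -> (2 <= c)%R -> measurable_fun setT G ->
  (forall x, c%:E * rho x <= G x) -> (forall x, k x <= G x) ->
  Gamma_F Gstar F gam -> Defs.Im gam y -> (f y <= 2^-1)%R ->
  1 <= lineint mu gam G.
Proof.
case=> _ fF mrho rho0 hgrad [mk [k0 kadm]] c2 mG crhoG kG.
move=> [Gg [x [[s sI sx] Fx]]] [t tI ty] fy.
have fx := fF _ Fx.
have [h [Gh hI] jump] : exists2 h, Gstar h /\ Defs.Im h `<=` Defs.Im gam &
    (2^-1 <= `|f (pf h (pa h)) - f (pf h (pb h))|)%R.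
  case: (ltgtP s t) => [st|ts|st].
  - exists (Path s t (pf gam)); first exact: Gstar_restrict.
    by rewrite /= sx ty; apply: le_trans (ler_norm _); lra.
  - exists (Path t s (pf gam)); first exact: Gstar_restrict.
    by rewrite /= sx ty distrC; apply: le_trans (ler_norm _); lra.
  - by move: fy; rewrite -ty -st sx; lra.
have c0 : (0 <= c)%R by lra.
case: (pselect (G0 h)) => hG0.
  apply: le_trans (kadm h hG0) _.
  apply: le_trans (lineint_subpath Gg Gh hI mk k0) _.
  exact: le_lineint.
have half : (2^-1)%:E <= lineint mu gam rho.
  apply: le_trans (lineint_subpath Gg Gh hI mrho rho0).
  by apply: le_trans (hgrad h Gh hG0); rewrite lee_fin.
apply: le_trans (le_lineint Gg (measurable_funeM _ mrho) mG _ crhoG); last first.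
  by move=> z; rewrite mule_ge0 // lee_fin.
rewrite /lineint ge0_integralZl_EFin //; last first.
- exact: measurable_funS mrho.
- exact: measurable_Im_Gstar.
apply: le_trans (lee_wpmul2l _ half); first by rewrite -EFinM lee_fin; lra.
by rewrite lee_fin.
Qed.

Lemma lineint_ge1_of_gt_half {f} {c : R} {G : T -> \bar R} {gam} :
  measurable_fun setT (EFin \o f) -> measurable_fun setT G -> (0 <= c)%R ->
  (forall x, c%:E * `|(f x)%:E| <= G x) -> Gstar gam ->
  (forall y, Defs.Im gam y -> (2^-1 < f y)%R) -> 2%:E <= c%:E * mu (Defs.Im gam) ->
  1 <= lineint mu gam G.
Proof.
move=> mf mG c0 cfG Gg fgt cM.
have mcf : measurable_fun setT (fun x => c%:E * `|(f x)%:E|).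
  by apply: measurable_funeM; apply: measurableT_comp mf; exact: abse_measurable.
apply: le_trans (le_lineint Gg mcf mG _ cfG); last first.
  by move=> z; rewrite mule_ge0 // lee_fin.
have mI := measurable_Im_Gstar Gg.
apply: (@le_trans _ _ (\int[mu]_(x in Defs.Im gam) (c * 2^-1)%:E)).
  rewrite integral_cst // EFinM (muleC c%:E) -muleA.
  apply: le_trans (lee_wpmul2l _ cM); first by rewrite -EFinM lee_fin mulVf.
  by rewrite lee_fin.
apply: ge0_le_integral => //.
- by move=> z _; rewrite lee_fin mulr_ge0.
- exact: measurable_funS mcf.
- move=> z Iz; rewrite -EFinM lee_fin ler_wpM2l //.
  by have := fgt z Iz; have := ler_norm (f z); lra.
Qed.

Lemma admissible_Gamma_F {f : nat -> T -> R} {rho : nat -> T -> \bar R}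
    {G0 : nat -> set (mpath R T)} {k : nat -> T -> \bar R} {G : T -> \bar R} :
  (forall i, F_test (f i) (rho i) (G0 i) (k i)) ->
  measurable_fun setT G -> (forall x, 0 <= G x) ->
  (forall i x, [/\ (i.+2)%:R%:E * rho i x <= G x, k i x <= G x &
                   (i.+2)%:R%:E * `|(f i x)%:E| <= G x]) ->
  admissible mu (Gamma_F Gstar F) G.
Proof.
move=> hf mG G0' hG; split => //; split => // gam gamF.
case: (pselect (exists i y, Defs.Im gam y /\ (f i y <= 2^-1)%R)).
  move=> [i [y [Iy fy]]].
  apply: (lineint_ge1_of_crossing (c := i.+2%:R) (hf i) _ mG _ _ gamF Iy fy).
  - by rewrite ler_nat.
  - by move=> x; case: (hG i x).
  - by move=> x; case: (hG i x).
move=> nodrop; have [Gg _] := gamF.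
have [M0 Moo] := Gstar_Im_measure Gg.
have Mfin : mu (Defs.Im gam) \is a fin_num by rewrite ge0_fin_numE // ltW.
pose r := fine (mu (Defs.Im gam)).
have r0 : (0 < r)%R by rewrite -lte_fin fineK.
pose j := Num.truncn (2 / r).
have [mfj _ _ _ _ _] := hf j.
apply: (lineint_ge1_of_gt_half (c := j.+2%:R) mfj mG _ _ Gg).
- by [].
- by move=> x; case: (hG j x).
- move=> y Iy; rewrite ltNge; apply/negP => fy.
  by apply: nodrop; exists j, y.
- rewrite -(fineK Mfin) -EFinM lee_fin -/r.
  have : (2 / r < j.+1%:R)%R by exact: truncnS_gt.
  rewrite ltr_pdivrMr // => h2; apply: le_trans (ltW h2) _.
  by rewrite ler_pM2r // ler_nat.
Qed.


Lemma Mod_p_Gamma_F_le :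
  ereal_inf [set N1p_norm mu m p Gstar f |
    f in [set f | Ntilde mu m p Gstar f /\ forall x, F x -> (1 <= f x)%R]] = 0 ->
  forall eps : R, (0 < eps)%R -> Mod_p mu m p (Gamma_F Gstar F) <= (3 * eps)%:E.
Proof.
move=> hinf eps eps0.
pose c i : R := i.+2%:R; pose e i : R := (eps / (2 ^ i.+1)%:R)%R.
have c0 i : (0 < c i)%R by rewrite ltr0n.
have e0 i : (0 < e i)%R by rewrite divr_gt0 // ltr0n expn_gt0.
have hex i := exists_small_F_test hinf (c i) (e i) (c0 i) (e0 i).
have [f /choice[rho /choice[G0 /choice[k hk]]]] := choice hex.
have hf i : F_test (f i) (rho i) (G0 i) (k i) by case: (hk i).
pose u i x := ((c i)%:E * rho i x) `^ p + k i x `^ p + ((c i)%:E * `|(f i x)%:E|) `^ p.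
have u0 i x : 0 <= u i x by rewrite !adde_ge0 ?poweR_ge0.
have [mcrho mk mcf] : [/\ forall i, measurable_fun setT (fun x => (c i)%:E * rho i x),
    forall i, measurable_fun setT (k i) &
    forall i, measurable_fun setT (fun x => (c i)%:E * `|(f i x)%:E|)].
  split=> i; case: (hf i) => mf _ mrho _ _ [mki _] //; apply: measurable_funeM => //.
  by apply: measurableT_comp mf; exact: abse_measurable.
have mpow (w : T -> \bar R) : measurable_fun setT w -> measurable_fun setT (fun x => w x `^ p).
  exact: measurableT_comp (measurable_poweR _).
have mu_ i : measurable_fun setT (u i).
  by apply: emeasurable_funD; [apply: emeasurable_funD|]; apply: mpow.
pose G := root_series p u.
apply: le_trans (ereal_inf_lbound _) _.
  exists G => //; apply: (admissible_Gamma_F hf (measurable_root_series u0 mu_)).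
  - by move=> x; exact: poweR_ge0.
  - move=> i x; case: (hf i) => _ _ _ rho0 _ [_ [k0 _]].
    have ge0_c y : 0 <= (c i)%:E * y <-> 0 <= y by rewrite pmule_rge0 ?lte_fin.
    split; apply: (root_series_ge p0 u0 i); rewrite ?ge0_c ?k0 ?rho0 ?abse_ge0 //.
    + by rewrite /u -addeA leeDl // adde_ge0 ?poweR_ge0.
    + by rewrite /u -addeA addeCA leeDl // adde_ge0 ?poweR_ge0.
    + by rewrite /u leeDr // adde_ge0 ?poweR_ge0.
rewrite integral_root_series //.
apply: le_trans (epsilon_trick0 xpredT (ltW (mulr_gt0 (ltr0n _ 3) eps0))).
apply: lee_nneseries => [i _ _|i _]; first by apply: integral_ge0 => x _; exact: u0.
have [_ [sf srho sk]] := hk i.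
rewrite integral_poweRD3 //; apply: le_trans (leeD (leeD srho sk) sf) _.
rewrite -!EFinD lee_fin /e -!mulrDl.
by have -> : (eps + eps + eps = 3 * eps)%R by lra.
Qed.

End modulus_Gamma_F.

Theorem lemma4p2 (R : realType) (d : measure_display) (T : measurableType d)
  (dist : T -> T -> R) (mu m : {measure set T -> \bar R}) (p : R)
  (Gstar : set (mpath R T)) (F : set T) :
  is_metric dist ->
  borel_for dist ->
  (forall x : T, mu [set x] = 0%E) ->
  0 < p ->
  Gstar `<=` Gamma_mu dist mu ->
  (forall g h, Gstar g -> subpath h g -> nontrivial h -> Gstar h) ->
  (forall x y : T, x <> y -> exists2 g, Gstar g &
     (pf g (pa g) = x /\ pf g (pb g) = y) \/ (pf g (pa g) = y /\ pf g (pb g) = x)) ->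
  ereal_inf [set N1p_norm mu m p Gstar f |
               f in [set f | Ntilde mu m p Gstar f /\ forall x, F x -> 1 <= f x]]
    = 0%E ->
  Mod_p mu m p (Gamma_F Gstar F) = 0%E.
Proof.
move=> hm hb _ p0 hGs hsub _ hinf.
apply/eqP; rewrite eq_le; apply/andP; split.
- apply/lee_addgt0Pr => e e0; rewrite add0e.
  have e3 : 0 < e / 3 by rewrite divr_gt0.
  have := Mod_p_Gamma_F_le hm hb p0 hGs hsub hinf _ e3.
  by rewrite mulrC divfK.
- apply: le_ereal_inf_tmp => _ [g [_ [g0 _]] <-].
  by apply: integral_ge0 => x _; exact: poweR_ge0.
Qed.
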